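(* Let $(\mathfrak g,[-,-])$ be a Lie algebra and $(\rho,V)$ a representation. Every invertible anti-$\mathcal O$-operator $T:V\to\mathfrak g$ of $(\mathfrak g,[-,-])$ associated to $(\rho,V)$ is strong.
   Context: All vector spaces are finite-dimensional over a field $\mathbb F$ of characteristic $0$. A linear map $T:V\to\mathfrak g$ is an anti-$\mathcal O$-operator associated to a representation $(\rho,V)$ if $[T(u),T(v)]=T(\rho(T(v))u-\rho(T(u))v)$ for all $u,v\in V$; it is strong if moreover $\rho([T(u),T(v)])w+\rho([T(v),T(w)])u+\rho([T(w),T(u)])v=0$ for all $u,v,w\in V$. *)

From HB Require Import structures.
From mathcomp Require Import all_boot all_order all_algebra.
Set Implicit Arguments. Unset Strict Implicit. Unset Printing Implicit Defensive.
Import GRing.Theory.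
Local Open Scope ring_scope.

Definition is_lie_bracket (F : fieldType) (g : vectType F) (br : g -> g -> g) : Prop :=
  [/\ (forall (a : F) (x y z : g), br (a *: x + y) z = a *: br x z + br y z),
      (forall (a : F) (x y z : g), br z (a *: x + y) = a *: br z x + br z y),
      (forall x : g, br x x = 0) &
      (forall x y z : g, br x (br y z) + br y (br z x) + br z (br x y) = 0)].

Definition is_lie_rep (F : fieldType) (g V : vectType F) (br : g -> g -> g)
  (rho : g -> V -> V) : Prop :=
  [/\ (forall (a : F) (x y : g) (v : V), rho (a *: x + y) v = a *: rho x v + rho y v),
      (forall (a : F) (x : g) (u v : V), rho x (a *: u + v) = a *: rho x u + rho x v) &
      (forall (x y : g) (v : V), rho (br x y) v = rho x (rho y v) - rho y (rho x v))].

Definition anti_O_operator (F : fieldType) (g V : vectType F) (br : g -> g -> g)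
  (rho : g -> V -> V) (T : {linear V -> g}) : Prop :=
  forall u v : V, br (T u) (T v) = T (rho (T v) u - rho (T u) v).

Definition strong_anti_O_operator (F : fieldType) (g V : vectType F) (br : g -> g -> g)
  (rho : g -> V -> V) (T : {linear V -> g}) : Prop :=
  anti_O_operator br rho T /\
  forall u v w : V,
    rho (br (T u) (T v)) w + rho (br (T v) (T w)) u + rho (br (T w) (T u)) v = 0.

From HB Require Import structures.
From mathcomp Require Import all_boot all_order all_algebra.
Import GRing.Theory.
Local Open Scope ring_scope.

(* Expand the Jacobi identity for [T u], [T v], [T w], pulling every bracket
   through [T] with the anti-O-operator identity.  The terms of the form
   [rho (T x) (rho (T y) z)] pair up into [rho]-images of brackets, and the whole
   Jacobiator becomes [T] applied to twice the defect
   [rho [T u, T v] w + rho [T v, T w] u + rho [T w, T u] v].  As [T] is injective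
   and [2 != 0], the defect vanishes. *)

Lemma mulrn_eq0_pchar0 (F : fieldType) (V : lmodType F) (v : V) (n : nat) :
  [pchar F] =i pred0 -> (v *+ n == 0) = (n == 0)%N || (v == 0).
Proof. by move=> F0; rewrite -scaler_nat scaler_eq0 (pcharf0P F).1. Qed.

Lemma addrB3_rot (V : zmodType) (a b c x y z : V) :
  (a - x) + (b - y) + (c - z) = (a - y) + (b - z) + (c - x).
Proof.
have sumB3 (x' y' z' : V) : (a - x') + (b - y') + (c - z') = a + b + c - (x' + y' + z').
  by rewrite !opprD [RHS]addrACA [a + b + _]addrACA.
by rewrite !sumB3 [y + z + x]addrC addrA.
Qed.

Section AntiOOperator.

Set Implicit Arguments.

Variables (F : fieldType) (g V : vectType F) (br : g -> g -> g) (rho : g -> V -> V).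
Hypothesis hrho : is_lie_rep br rho.
Variable T : {linear V -> g}.
Hypothesis hT : anti_O_operator br rho T.

Lemma lie_repB (x : g) (u v : V) : rho x (u - v) = rho x u - rho x v.
Proof.
case: hrho => _ rhoZD _.
by rewrite addrC -scaleN1r rhoZD scaleN1r addrC.
Qed.

Definition strong_defect (u v w : V) : V :=
  rho (br (T u) (T v)) w + rho (br (T v) (T w)) u + rho (br (T w) (T u)) v.

Lemma anti_O_bracketT u v w :
  br (T u) (br (T v) (T w)) =
  T (rho (br (T v) (T w)) u + (rho (T u) (rho (T v) w) - rho (T u) (rho (T w) v))).
Proof. by rewrite {1}hT hT -(hT v w) lie_repB opprB. Qed.

Lemma cyclic_sum_nested_rho u v w :
  (rho (T u) (rho (T v) w) - rho (T u) (rho (T w) v)) +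
  (rho (T v) (rho (T w) u) - rho (T v) (rho (T u) w)) +
  (rho (T w) (rho (T u) v) - rho (T w) (rho (T v) u)) = strong_defect u v w.
Proof. by case: hrho => _ _ rhoM; rewrite addrB3_rot -!rhoM. Qed.

Lemma jacobiatorT u v w :
  br (T u) (br (T v) (T w)) + br (T v) (br (T w) (T u)) + br (T w) (br (T u) (T v)) =
  T (strong_defect u v w *+ 2).
Proof.
rewrite !anti_O_bracketT -!linearD; congr (T _).
rewrite [X in X + _]addrACA [LHS]addrACA cyclic_sum_nested_rho mulr2n.
by rewrite [X in X + _ = _]addrC addrA.
Qed.

End AntiOOperator.

Theorem proposition2p17 (F : fieldType) (hF : [pchar F] =i pred0)
  (g V : vectType F) (br : g -> g -> g) (hbr : is_lie_bracket br)
  (rho : g -> V -> V) (hrho : is_lie_rep br rho)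
  (T : {linear V -> g}) (hTinv : bijective T) (hT : anti_O_operator br rho T) :
  strong_anti_O_operator br rho T.
Proof.
split=> // u v w; case: hbr => _ _ _ jacobi.
have : T (strong_defect br rho T u v w *+ 2) = T 0.
  by rewrite -(jacobiatorT hrho hT) jacobi linear0.
move/(bij_inj hTinv)/eqP; rewrite mulrn_eq0_pchar0 //=.
by move/eqP.
Qed.
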